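(* Let $d\ge 1$ and let $Z_1,\ldots,Z_d$ be independent standard normal random variables. For $q\in\mathbb{R}$ and $l=(l_1,\ldots,l_d)'\in\mathbb{R}^d$ define $H(q;l)=P\big(\sum_{j=1}^d l_j Z_j^2\le q\big)$, where the probability is with respect to $Z_1,\ldots,Z_d$ only. Let $\lambda=(\lambda_1,\ldots,\lambda_d)'$ be a fixed vector with $\lambda_j>0$ for all $j$. Let $(T_n)$ be any sequence of real-valued random variables, and let $(\hat\lambda_n)$ be a sequence of $\mathbb{R}^d$-valued random vectors (defined on the same probability space as the $T_n$) with $\hat\lambda_n\to\lambda$ in probability. Define $p_n=1-H(T_n;\lambda)$ and $\hat p_n=1-H(T_n;\hat\lambda_n)$. Then $\hat p_n-p_n=\|\hat\lambda_n-\lambda\|\,O_P(1)$, i.e. there exist random variables $B_n$ that are bounded in probability such that $|\hat p_n-p_n|\le \|\hat\lambda_n-\lambda\|\,B_n$; consequently $\hat p_n-p_n\to 0$ in probability.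
   Context: No assumption is made on the distribution of $T_n$. $O_P(1)$ denotes a sequence of random variables that is bounded in probability (tight). *)

From HB Require Import structures.
From mathcomp Require Import all_boot all_order all_algebra.
From mathcomp Require Import all_classical all_reals all_analysis.
Set Implicit Arguments. Unset Strict Implicit. Unset Printing Implicit Defensive.
Import Order.TTheory GRing.Theory Num.Theory.
Import numFieldNormedType.Exports.
Local Open Scope classical_set_scope.
Local Open Scope ring_scope.

Definition eucl_norm {R : realType} {d : nat} (x : 'I_d -> R) : R :=
  Num.sqrt (\sum_(j < d) x j ^+ 2).

(* Z_1..Z_d : Omega -> R are mutually independent (product rule for the
   joint preimage of every family of Borel sets; taking B_j = setT recovers
   all subfamilies). *)
Definition mutually_independent {R : realType} {dO : measure_display}
  {O : measurableType dO} (Q : probability O R) {d : nat}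
  (Z : 'I_d -> O -> R) : Prop :=
  forall B : 'I_d -> set R, (forall j, measurable (B j)) ->
    Q (\bigcap_(j in [set: 'I_d]) (Z j @^-1` B j)) =
    (\prod_(j < d) Q (Z j @^-1` B j))%E.

Definition std_normal {R : realType} {dO : measure_display}
  {O : measurableType dO} (Q : probability O R) (X : O -> R) : Prop :=
  measurable_fun setT X /\
  forall A : set R, measurable A -> Q (X @^-1` A) = normal_prob 0 1 A.

Definition Hfun {R : realType} {dO : measure_display}
  {O : measurableType dO} (Q : probability O R) {d : nat}
  (Z : 'I_d -> O -> R) (q : R) (l : 'I_d -> R) : R :=
  fine (Q [set w | \sum_(j < d) l j * (Z j w) ^+ 2 <= q]).

Definition cvg_in_prob {R : realType} {dO : measure_display}
  {O : measurableType dO} (P : probability O R)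
  (X : nat -> O -> R) (Y : O -> R) : Prop :=
  forall eps : R, 0 < eps ->
    (fun n => P [set w | eps < `|X n w - Y w|]) @ \oo --> 0%E.

Definition bounded_in_prob {R : realType} {dO : measure_display}
  {O : measurableType dO} (P : probability O R) (B : nat -> O -> R) : Prop :=
  forall eps : R, 0 < eps ->
    exists M : R, forall n, (P [set w | (M < `|B n w|)%R] <= eps%:E)%E.

(* The map [l |-> H(q; l)] is Lipschitz at [lambda], uniformly in [q], so
   [|p^_n - p_n| <= C ||lambda^_n - lambda||] with a deterministic [C], which
   is trivially bounded in probability.

   Raising one coefficient [l_k] from [a] to [a'] lowers [H(q; l)] by at most
   [2 (a'/a - 1)]: conditionally on the other coordinates, which are
   independent of [Z_k], the lost event is [sqrt (t/a') < |Z_k| <= sqrt (t/a)],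
   of Gaussian mass at most [2 (x - y) phi(y) = 2 (sqrt (a'/a) - 1) y phi(y)]
   with [y phi(y) <= 1].  Changing the [d] coefficients one at a time and
   sandwiching [l] between [(1 - r) lambda] and [(1 + r) lambda] bounds
   [|H(q; l) - H(q; lambda)|] by [8 d r]; far from [lambda] the bound
   [|H(q; l) - H(q; lambda)| <= 1] suffices. *)

From HB Require Import structures.
From mathcomp Require Import all_boot all_order all_algebra.
From mathcomp Require Import all_classical all_reals all_analysis.
From mathcomp Require Import measurable_realfun ring lra.
Import Order.TTheory GRing.Theory Num.Theory.
Import numFieldNormedType.Exports.
Local Open Scope classical_set_scope.
Local Open Scope ring_scope.

Section level_sets.
Context {R : realType} {d : measure_display} {T : measurableType d}.

Lemma measurable_ler_cst (f : T -> R) t :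
  measurable_fun setT f -> measurable [set x | f x <= t].
Proof.
move=> mf; have := mf measurableT _ (measurable_itv `]-oo, t]).
by rewrite setTI; congr measurable; apply/seteqP; split => x /=; rewrite in_itv.
Qed.

Lemma measurable_ltr_cst (f : T -> R) t :
  measurable_fun setT f -> measurable [set x | t < f x].
Proof.
move=> mf; have := mf measurableT _ (measurable_itv `]t, +oo[).
by rewrite setTI; congr measurable; apply/seteqP; split => x /=; rewrite in_itv /= andbT.
Qed.

End level_sets.

Section standard_normal.
Context {R : realType}.
Local Notation mu := (@lebesgue_measure R).

Lemma mulr_expR_sqr_le1 (y : R) : y * expR (- (y ^+ 2) / 2) <= 1.
Proof.
rewrite mulNr expRN mulrC ler_pdivrMl ?expR_gt0 // mulr1.
by apply: le_trans (expR_ge1Dx _); nra.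
Qed.

Lemma normal_pdf01_mulr_le1 (y : R) : y * normal_pdf 0 1 y <= 1.
Proof.
have peak_le1 : normal_peak (1 : R) <= 1.
  rewrite /normal_peak invf_le1; last first.
    by rewrite sqrtr_gt0 pmulrn_lgt0 // mulr_gt0 ?pi_gt0 // exprn_gt0.
  rewrite -[X in X <= _]sqrtr1 ler_wsqrtr // expr1n mul1r mulr2n.
  by have := pi_ge2 R; lra.
have [y0|y0] := lerP 0 y; last first.
  by apply: le_trans ler01; rewrite mulr_le0_ge0 ?normal_pdf_ge0 ?ltW.
rewrite normal_pdfE ?oner_neq0 //= mulrCA mulr_ile1 ?normal_peak_ge0 //.
  by rewrite mulr_ge0 // normal_fun_ge0.
by rewrite /normal_fun subr0 expr1n mulr2n; exact: mulr_expR_sqr_le1.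
Qed.

Lemma normal_prob_annulus_le (y x : R) : 0 <= y -> y <= x ->
  (normal_prob 0 1 ([set` `[(- x)%R, (- y)%R]] `|` [set` `[y, x]]) <=
   (2 * (x - y) * normal_pdf 0 1 y)%:E)%E.
Proof.
move=> y0 yx; set I := _ `|` _.
have mI : measurable I by apply: measurableU; exact: measurable_itv.
have itv_le u v : u <= v -> (mu [set` `[u, v]] <= (v - u)%:E)%E.
  move=> uv; rewrite lebesgue_measure_itv /= lte_fin.
  by case: ltP; rewrite ?lee_fin ?subr_ge0.
apply: (@le_trans _ _ (\int[mu]_(z in I) (cst (normal_pdf 0 1 y)%:E) z)%E).
  rewrite /normal_prob; apply: ge0_le_integral => //.
  - by move=> z _; rewrite lee_fin normal_pdf_ge0.
  - by apply/measurable_EFinP; apply: measurable_funTS; exact: measurable_normal_pdf.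
  - move=> z Iz; rewrite lee_fin; have yz : y ^+ 2 <= z ^+ 2.
      by case: Iz => /=; rewrite in_itv /= => /andP[zl zr]; nra.
    rewrite !normal_pdfE ?oner_neq0 //= ler_wpM2l ?normal_peak_ge0 //.
    by rewrite /normal_fun ler_expR !subr0 !mulNr lerN2 ler_pM2r.
rewrite integral_cst // mulrC EFinM.
apply: lee_wpmul2l; first by rewrite lee_fin normal_pdf_ge0.
apply: le_trans (measureU2 mu (measurable_itv _) (measurable_itv _)) _.
rewrite mulr2n mulrDl mul1r EFinD leeD ?itv_le //.
by rewrite -[x in (x - _)%:E]opprK addrC itv_le // lerN2.
Qed.

Lemma measurable_scale_sqr_le (a t : R) : measurable [set z : R | a * z ^+ 2 <= t].
Proof. by apply: measurable_ler_cst; apply: measurable_funM. Qed.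

(* With [x = sqrt (t / a)], [y = sqrt (t / a')] and [s = sqrt (a' / a)], the
   lost event is the annulus [y < |z| <= x] and [x - y = (s - 1) y]. *)
Lemma normal_prob_scale_sqr_le (a a' t : R) : 0 < a -> a <= a' ->
  (normal_prob 0 1 [set z | (a * z ^+ 2 <= t)%R] <=
   normal_prob 0 1 [set z | (a' * z ^+ 2 <= t)%R] + (2 * (a' / a - 1))%:E)%E.
Proof.
move=> a0 aa'; have a'0 : 0 < a' := lt_le_trans a0 aa'.
set S := [set z | a * _ <= t]; set S' := [set z | a' * _ <= t].
have S'S : S' `<=` S by move=> z /=; apply: le_trans; rewrite ler_wpM2r ?sqr_ge0.
have mS : measurable S := measurable_scale_sqr_le a t.
have mS' : measurable S' := measurable_scale_sqr_le a' t.
rewrite -(setDUK S'S) measureU ?setDIK //; last exact: measurableD.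
apply: leeD2l.
set x := Num.sqrt (t / a); set y := Num.sqrt (t / a'); set s := Num.sqrt (a' / a).
have xE : x = s * y.
  rewrite /x /s /y -sqrtrM ?divr_ge0 ?ltW //; congr Num.sqrt.
  by field; rewrite ?gt_eqF.
have s1 : 1 <= s.
  by rewrite /s -sqrtr1; apply: ler_wsqrtr; rewrite ler_pdivlMr // mul1r.
have y0 : 0 <= y by rewrite sqrtr_ge0.
have yx : y <= x by rewrite xE ler_peMl.
have S_annulus : S `\` S' `<=` [set` `[- x, - y]] `|` [set` `[y, x]].
  move=> z [/= zS /negP]; rewrite -ltNge => zS'.
  have t0 : 0 <= t := le_trans (mulr_ge0 (ltW a0) (sqr_ge0 z)) zS.
  have zx : `|z| <= x.
    by rewrite /x -sqrtr_sqr ler_sqrt ?divr_ge0 ?(ltW a0) // ler_pdivlMr // mulrC.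
  have yz : y < `|z|.
    have z2 : 0 < z ^+ 2 by have := le_lt_trans t0 zS'; rewrite pmulr_rgt0.
    by rewrite /y -sqrtr_sqr ltr_sqrt // ltr_pdivrMr // mulrC.
  have [z0|z0] := lerP 0 z.
    by right; rewrite /= in_itv /= -(ger0_norm z0) zx ltW.
  left; rewrite /= in_itv /= -[z]opprK !lerN2 -(ltr0_norm z0).
  by rewrite zx ltW.
apply: (@le_trans _ _ (normal_prob 0 1 ([set` `[- x, - y]] `|` [set` `[y, x]]))).
  apply: le_measure => //; rewrite inE; first exact: measurableD.
  by apply: measurableU; exact: measurable_itv.
apply: le_trans; first exact: normal_prob_annulus_le.
rewrite lee_fin xE.
have sE : a' / a = s ^+ 2 by rewrite sqr_sqrtr // divr_ge0 // ltW.
have := normal_pdf01_mulr_le1 y; have := normal_pdf_ge0 0 1 y.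
by rewrite sE; nra.
Qed.

End standard_normal.

Section independent_pair.
Context {R : realType} {d : measure_display} {T : measurableType d}
  (Q : probability T R) (X Y : {mfun T >-> R}).
Hypothesis XY_indep : forall A B, measurable A -> measurable B ->
  Q (X @^-1` A `&` Y @^-1` B) = (Q (X @^-1` A) * Q (Y @^-1` B))%E.

Lemma distribution_pair_indep (S : set (R * R)) : measurable S ->
  Q ((fun v => (X v, Y v)) @^-1` S) = (distribution Q X \x distribution Q Y)%E S.
Proof.
move=> mS; pose XY : {mfun T >-> (R * R)%type} := HB.pack (fun v => (X v, Y v))
  (isMeasurableFun.Build _ _ _ _ _
    (measurable_fun_pair (@measurable_funPT _ _ _ _ X) (@measurable_funPT _ _ _ _ Y))).
rewrite -[LHS]/(distribution Q XY S); symmetry.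
by apply: product_measure_unique => // A B mA mB; exact: XY_indep.
Qed.

End independent_pair.

Section euclidean_norm.
Context {R : realType} {d : nat}.

Lemma eucl_norm_ge_coord (x : 'I_d -> R) j : `|x j| <= eucl_norm x.
Proof.
rewrite /eucl_norm -sqrtr_sqr ler_sqrt ?sumr_ge0 // => [|i _]; last exact: sqr_ge0.
by rewrite (bigD1 j) //= lerDl sumr_ge0 // => i _; rewrite sqr_ge0.
Qed.

End euclidean_norm.

Section quadratic_form.
Context {R : realType} {dZ : measure_display} {OZ : measurableType dZ}
  (Q : probability OZ R) {d : nat} (Z : 'I_d -> OZ -> R).
Hypothesis mZ : forall j, measurable_fun setT (Z j).
Hypothesis Z_indep : mutually_independent Q Z.
Hypothesis Z_normal : forall j, std_normal Q (Z j).

Definition cylinder_off (k : 'I_d) : set (set OZ) :=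
  [set E | exists2 B : 'I_d -> set R, (forall j, measurable (B j)) /\ B k = setT &
     E = \bigcap_(j in [set: 'I_d]) Z j @^-1` B j].

Lemma cylinder_off_measurable k : cylinder_off k `<=` measurable.
Proof.
move=> E [B [mB _] ->]; apply: fin_bigcap_measurable; first exact: finite_finset.
by move=> j _; rewrite -[X in measurable X]setTI; apply: mZ.
Qed.

Lemma cylinder_offT k : cylinder_off k setT.
Proof. by exists (fun _ => setT) => //; apply/seteqP; split => v //= _ j _. Qed.

Lemma cylinder_offI k : setI_closed (cylinder_off k).
Proof.
move=> E F [B [mB Bk] ->] [C [mC Ck] ->].
exists (fun j => B j `&` C j).
  by split=> [j|]; [exact: measurableI | rewrite Bk Ck setIT].
apply/seteqP; split => v /=.
  by move=> [vB vC] j _; split; [exact: vB | exact: vC].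
by move=> vBC; split => j _; have [] := vBC j I.
Qed.

Lemma measurable_fun_cylinder_off k (f : OZ -> R) :
  measurable_fun (setT : set (g_sigma_algebraType (cylinder_off k))) f ->
  measurable_fun setT f.
Proof.
move=> mf _ B mB; have := mf measurableT _ mB; rewrite !setTI.
exact: smallest_sub (@sigma_algebra_measurable _ OZ) (@cylinder_off_measurable k) _.
Qed.

Lemma measurable_coord_off j k : j != k ->
  measurable_fun (setT : set (g_sigma_algebraType (cylinder_off k))) (Z j).
Proof.
move=> jk _ B mB; apply: sub_sigma_algebra.
exists (fun i => if i == j then B else setT).
  by split=> [i|]; [case: ifP | rewrite eq_sym (negbTE jk)].
apply/seteqP; split => v /=; first by move=> [_ vB] i _; case: eqP => [->|].
by move=> vB; split => //; have := vB j I; rewrite eqxx.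
Qed.

(* Both sides are finite measures in [E] that agree on the pi-system
   [cylinder_off k] by mutual independence, hence on the sigma-algebra it
   generates. *)
Lemma indep_cylinder_off k (A : set R) (E : set OZ) : measurable A ->
  <<s cylinder_off k >> E -> Q (E `&` Z k @^-1` A) = (Q E * Q (Z k @^-1` A))%E.
Proof.
move=> mA sE.
have mZA : measurable (Z k @^-1` A) by rewrite -[X in measurable X]setTI; apply: mZ.
have QZA0 : 0 <= fine (Q (Z k @^-1` A)) by rewrite fine_ge0.
have mscaleE F : mscale (NngNum QZA0) Q F = (Q F * Q (Z k @^-1` A))%E.
  by rewrite /mscale /= fineK ?fin_num_measure // muleC.
rewrite -mscaleE.
apply: (@g_sigma_algebra_measure_unique _ R OZ _ (@cylinder_off_measurable k)
  _ (fun=> cylinder_offT k) _ (mrestr Q mZA) (mscale (NngNum QZA0) Q)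
  (@cylinder_offI k) _ _ E sE).
- by rewrite bigcup_const.
- move=> F [B [mB Bk] ->].
  change (Q ((\bigcap_(j in [set: 'I_d]) Z j @^-1` B j) `&` Z k @^-1` A) =
    (fine (Q (Z k @^-1` A)))%:E * Q (\bigcap_(j in [set: 'I_d]) Z j @^-1` B j))%E.
  rewrite fineK ?fin_num_measure // muleC.
  pose B' j := if j == k then A else B j.
  have mB' j : measurable (B' j) by rewrite /B'; case: ifP.
  have -> : (\bigcap_(j in [set: 'I_d]) Z j @^-1` B j) `&` Z k @^-1` A =
            \bigcap_(j in [set: 'I_d]) Z j @^-1` B' j.
    apply/seteqP; split => v /=.
      by move=> [vB vA] j _; rewrite /B'; case: eqP => [->|_] //; exact: vB.
    move=> vB'; split; last by have := vB' k I; rewrite /B' eqxx.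
    by move=> j _; have := vB' j I; rewrite /B'; case: eqP => [->|_] //; rewrite Bk.
  rewrite !Z_indep // (bigD1 k) //= [in RHS](bigD1 k) //= /B' eqxx Bk.
  rewrite preimage_setT probability_setT mul1e muleC; congr (_ * _)%E.
  by apply: eq_bigr => j /negbTE ->.
- move=> n; change (Q (setT `&` Z k @^-1` A) < +oo)%E.
  by rewrite setTI (le_lt_trans (probability_le1 _ _)) ?ltry.
Qed.

Definition qform (c : 'I_d -> R) (v : OZ) : R := \sum_(j < d) c j * Z j v ^+ 2.

Lemma measurable_qform c : measurable_fun setT (qform c).
Proof.
by apply: measurable_sum => j; apply: measurable_funM => //; exact: measurable_funX.
Qed.

Lemma measurable_qform_le c q : measurable [set v | (qform c v <= q)%R].
Proof. exact: measurable_ler_cst (measurable_qform c). Qed.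

Lemma qform_coord c k v :
  qform c v = c k * Z k v ^+ 2 + \sum_(j < d | j != k) c j * Z j v ^+ 2.
Proof. by rewrite /qform (bigD1 k). Qed.

Lemma measurable_qform_off (c : 'I_d -> R) k :
  measurable_fun (setT : set (g_sigma_algebraType (cylinder_off k)))
    (fun v => \sum_(j < d | j != k) c j * Z j v ^+ 2).
Proof.
under eq_fun do rewrite big_mkcond /=.
apply: measurable_sum => j; have [jk|_] := boolP (j != k); last exact: measurable_cst.
by apply: measurable_funM => //; apply: measurable_funX; exact: measurable_coord_off.
Qed.

(* The rest [f] of the quadratic form is independent of [Z_k], so the
   probabilities are integrals against the law of [f] of the one-dimensional
   Gaussian probabilities bounded by [normal_prob_scale_sqr_le]. *)
Lemma prob_qform_coord_le (c c' : 'I_d -> R) k q :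
  (forall j, j != k -> c j = c' j) -> 0 < c k -> c k <= c' k ->
  (Q [set v | (qform c v <= q)%R] <=
   Q [set v | (qform c' v <= q)%R] + (2 * (c' k / c k - 1))%:E)%E.
Proof.
move=> cc' ck0 ckc'.
pose f v := \sum_(j < d | j != k) c j * Z j v ^+ 2.
have mf_off := measurable_qform_off c k.
pose F : {mfun OZ >-> R} :=
  HB.pack f (isMeasurableFun.Build _ _ _ _ f (measurable_fun_cylinder_off _ _ mf_off)).
pose Zk : {mfun OZ >-> R} := HB.pack (Z k) (isMeasurableFun.Build _ _ _ _ _ (mZ k)).
have F_Zk_indep A B : measurable A -> measurable B ->
    Q (F @^-1` A `&` Zk @^-1` B) = (Q (F @^-1` A) * Q (Zk @^-1` B))%E.
  move=> mA mB; apply: indep_cylinder_off => //.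
  by have := mf_off measurableT _ mA; rewrite setTI.
pose S b := [set p : R * R | (b * p.2 ^+ 2 + p.1 <= q)%R].
have mS b : measurable (S b).
  apply: measurable_ler_cst; apply: measurable_funD => //.
  by apply: measurable_funM => //; apply: measurable_funX; exact: measurable_snd.
have QS g : (forall j, j != k -> g j = c j) ->
    Q [set v | (qform g v <= q)%R] = (distribution Q F \x distribution Q Zk)%E (S (g k)).
  move=> gc; rewrite -distribution_pair_indep //; congr (Q _); apply/seteqP.
  have fE v : qform g v = g k * Z k v ^+ 2 + f v.
    by rewrite (qform_coord _ k); congr (_ + _); apply: eq_bigr => j /gc ->.
  by split=> v; rewrite /= fE.
rewrite (QS c) // (QS c'); last by move=> j /cc' ->.
set K := 2 * (c' k / c k - 1).
change (\int[distribution Q F]_r (distribution Q Zk \o xsection (S (c k))) r <=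
  \int[distribution Q F]_r (distribution Q Zk \o xsection (S (c' k))) r + K%:E)%E.
have lawZk b r : (distribution Q Zk \o xsection (S b)) r =
    normal_prob 0 1 [set z | (b * z ^+ 2 <= q - r)%R].
  rewrite /= /distribution /pushforward -(Z_normal k).2; last first.
    exact: measurable_scale_sqr_le.
  by congr (Q _); apply/seteqP; split=> v; rewrite /xsection /= inE lerBrDr.
have K0 : 0 <= K by rewrite mulr_ge0 // subr_ge0 ler_pdivlMr // mul1r.
have mlaw b : measurable_fun setT (distribution Q Zk \o xsection (S b)).
  exact: measurable_fun_xsection.
apply: (@le_trans _ _ (\int[distribution Q F]_r
    ((distribution Q Zk \o xsection (S (c' k))) r + cst K%:E r))%E).
  apply: ge0_le_integral => //; first exact: emeasurable_funD.
  move=> r _; have := normal_prob_scale_sqr_le (c k) (c' k) (q - r) ck0 ckc'.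
  by rewrite -!lawZk.
rewrite ge0_integralD // integral_cst // leeD2l // -[leRHS]mule1.
by apply: lee_wpmul2l; rewrite ?lee_fin // probability_le1.
Qed.

Lemma prob_qform_le (m M : 'I_d -> R) (K q : R) :
  (forall j, 0 < m j) -> (forall j, m j <= M j) ->
  (forall j, 2 * (M j / m j - 1) <= K) -> 0 <= K ->
  (Q [set v | (qform m v <= q)%R] <=
   Q [set v | (qform M v <= q)%R] + (d%:R * K)%:E)%E.
Proof.
move=> m0 mM MmK K0.
pose c (i : nat) (j : 'I_d) := if (j < i)%N then M j else m j.
have c0 : c 0%N = m by apply/funext => j.
have cd : c d = M by apply/funext => j; rewrite /c ltn_ord.
suff step i : (i <= d)%N -> (Q [set v | (qform m v <= q)%R] <=
    Q [set v | (qform (c i) v <= q)%R] + (i%:R * K)%:E)%E.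
  by rewrite -cd; exact: step.
elim: i => [_|i IH id]; first by rewrite c0 mul0r adde0.
pose k := Ordinal id.
have ci_k : c i k = m k by rewrite /c ltnn.
have ci1_k : c i.+1 k = M k by rewrite /c ltnSn.
have ci_off j : j != k -> c i j = c i.+1 j.
  move=> jk; rewrite /c ltnS [(j <= i)%N]leq_eqVlt.
  by rewrite -[(j : nat) == i]/(j == k) (negbTE jk).
apply: le_trans (IH (ltnW id)) _.
have := prob_qform_coord_le _ _ _ q ci_off.
rewrite ci_k ci1_k => /(_ (m0 k) (mM k)) step.
apply: le_trans (leeD2r _ step) _.
rewrite -addeA leeD2l // -EFinD lee_fin -[i.+1]addn1 natrD.
by have := MmK k; lra.
Qed.

Lemma HfunE q c : (Hfun Q Z q c)%:E = Q [set v | (qform c v <= q)%R].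
Proof. by rewrite fineK // fin_num_measure //; exact: measurable_qform_le. Qed.

Lemma Hfun_ge0 q c : 0 <= Hfun Q Z q c.
Proof. by rewrite -lee_fin HfunE measure_ge0. Qed.

Lemma Hfun_le1 q c : Hfun Q Z q c <= 1.
Proof. by rewrite -lee_fin HfunE probability_le1 //; exact: measurable_qform_le. Qed.

Lemma Hfun_antitone q (c c' : 'I_d -> R) :
  (forall j, c j <= c' j) -> Hfun Q Z q c' <= Hfun Q Z q c.
Proof.
move=> cc'; rewrite -lee_fin !HfunE; apply: le_measure; rewrite ?inE.
- exact: measurable_qform_le.
- exact: measurable_qform_le.
move=> v /=; apply: le_trans; apply: ler_sum => j _.
by rewrite ler_wpM2r // sqr_ge0.
Qed.

Lemma Hfun_local_lipschitz (lam l : 'I_d -> R) (r q : R) :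
  (forall j, 0 < lam j) -> 0 <= r <= 1 / 2 ->
  (forall j, `|l j - lam j| <= r * lam j) ->
  `|Hfun Q Z q l - Hfun Q Z q lam| <= d%:R * (8 * r).
Proof.
move=> lam0 /andP[r0 r12] lr.
have r1 : 0 < 1 - r by lra.
pose m j := lam j * (1 - r); pose M j := lam j * (1 + r).
have m0 j : 0 < m j by rewrite mulr_gt0.
have rlam0 j : 0 <= r * lam j by rewrite mulr_ge0 // ltW.
have ml j : m j <= l j by have := lr j; rewrite ler_norml /m; have := rlam0 j; lra.
have lM j : l j <= M j by have := lr j; rewrite ler_norml /M; have := rlam0 j; lra.
have mlam j : m j <= lam j by rewrite /m; have := rlam0 j; lra.
have lamM j : lam j <= M j by rewrite /M; have := rlam0 j; lra.
have MmK j : 2 * (M j / m j - 1) <= 8 * r.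
  have -> : 2 * (M j / m j - 1) = 4 * r / (1 - r).
    by rewrite /M /m; field; rewrite (gt_eqF r1) (gt_eqF (lam0 j)).
  by rewrite ler_pdivrMr; nra.
have := prob_qform_le _ _ _ q m0 (fun j => le_trans (mlam j) (lamM j)) MmK.
rewrite -!HfunE -EFinD lee_fin => /(_ (ltac:(lra))) HmM.
have := Hfun_antitone q _ _ ml; have := Hfun_antitone q _ _ lM.
have := Hfun_antitone q _ _ mlam; have := Hfun_antitone q _ _ lamM.
by rewrite ler_norml; lra.
Qed.

Lemma Hfun_lipschitz (lam : 'I_d -> R) : (forall j, 0 < lam j) ->
  exists2 C, 0 <= C & forall q l,
    `|Hfun Q Z q l - Hfun Q Z q lam| <= C * eucl_norm (fun j => l j - lam j).
Proof.
move=> lam0.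
have [m m0 mlam] : exists2 m, 0 < m & forall j, m <= lam j.
  have inv_ge0 j : 0 <= (lam j)^-1 by rewrite invr_ge0 ltW.
  have S_gt0 : 0 < 1 + \sum_(j < d) (lam j)^-1 by rewrite ltr_wpDr ?sumr_ge0.
  exists (1 + \sum_(j < d) (lam j)^-1)^-1; first by rewrite invr_gt0.
  move=> j; rewrite -[lam j]invrK lef_pV2 ?posrE ?invr_gt0 //.
  by rewrite ler_wpDl // (bigD1 j) //= lerDl sumr_ge0.
exists ((8 * d%:R + 2) / m); first by rewrite divr_ge0 ?ltW.
move=> q l; set n := eucl_norm _.
have n0 : 0 <= n by rewrite sqrtr_ge0.
have [nm|mn] := lerP n (m / 2).
  pose r := n / m.
  have r_itv : 0 <= r <= 1 / 2 by rewrite divr_ge0 ?(ltW m0) //= ler_pdivrMr //; lra.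
  apply: le_trans (Hfun_local_lipschitz _ _ _ q lam0 r_itv _) _.
    move=> j; apply: le_trans (eucl_norm_ge_coord (fun j => l j - lam j) j) _.
    by rewrite -/n -[n](divfK (lt0r_neq0 m0)) -/r ler_wpM2l // (andP r_itv).1.
  have -> : d%:R * (8 * r) = 8 * d%:R / m * n by rewrite /r mulrCA !mulrA mulrAC.
  by rewrite ler_wpM2r // ler_pM2r ?invr_gt0 // lerDl.
apply: le_trans (_ : 1 <= _).
  have := Hfun_ge0 q l; have := Hfun_le1 q l.
  have := Hfun_ge0 q lam; have := Hfun_le1 q lam.
  by rewrite ler_norml; lra.
rewrite mulrAC ler_pdivlMr // mul1r.
have : 0 <= 8 * d%:R * n :> R by rewrite !mulr_ge0.
lra.
Qed.

Lemma measurable_Hfun {dO} {O : measurableType dO} (g : O -> R) (L : O -> 'I_d -> R) :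
  measurable_fun setT g -> (forall j, measurable_fun setT (fun w => L w j)) ->
  measurable_fun setT (fun w => Hfun Q Z (g w) (L w)).
Proof.
move=> mg mL.
pose F (p : O * OZ) := \sum_(j < d) L p.1 j * Z j p.2 ^+ 2 - g p.1.
have mF : measurable_fun setT F.
  apply: measurable_funB; last exact: measurableT_comp mg measurable_fst.
  apply: measurable_sum => j; apply: measurable_funM.
    exact: measurableT_comp (mL j) measurable_fst.
  by apply: measurable_funX; exact: measurableT_comp (mZ j) measurable_snd.
have -> : (fun w => Hfun Q Z (g w) (L w)) = fine \o (Q \o xsection [set p | F p <= 0]).
  apply/funext => w; rewrite /Hfun /=; congr (fine (Q _)).
  by apply/seteqP; split => v; rewrite /xsection /= inE /= /F subr_le0.
have := @measurable_fun_xsection _ _ O OZ R Q _ (measurable_ler_cst _ 0 mF).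
exact: measurableT_comp (fine_measurable measurableT).
Qed.

End quadratic_form.

Section convergence_in_probability.
Context {R : realType} {dO : measure_display} {O : measurableType dO}
  (P : probability O R).

Lemma measurable_eucl_norm {d} (x : O -> 'I_d -> R) :
  (forall j, measurable_fun setT (fun w => x w j)) ->
  measurable_fun setT (fun w => eucl_norm (x w)).
Proof.
move=> mx; apply: measurableT_comp (continuous_measurable_fun (@sqrt_continuous R)) _.
by apply: measurable_sum => j; exact: measurable_funX.
Qed.

Lemma bounded_in_prob_cst (C : R) : bounded_in_prob P (fun _ _ => C).
Proof.
move=> eps eps0; exists `|C| => n.
have -> : [set w : O | `|C| < `|C|] = set0 by apply/seteqP; split=> w //=; rewrite ltxx.
by rewrite measure0 lee_fin ltW.
Qed.

Lemma cvg_in_prob0_le (X Y : nat -> O -> R) (C : R) :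
  (forall n, measurable_fun setT (X n)) -> (forall n, measurable_fun setT (Y n)) ->
  0 <= C -> (forall n w, `|X n w| <= C * Y n w) ->
  cvg_in_prob P Y (fun _ => 0) -> cvg_in_prob P X (fun _ => 0).
Proof.
move=> mX mY C0 XY Y0 eps eps0.
have C1 : 0 < C + 1 by rewrite ltr_wpDl.
apply: squeeze_cvge (Y0 _ (divr_gt0 eps0 C1)); last exact: cvg_cst.
apply: nearW => n; rewrite measure_ge0 /=; apply: le_measure; rewrite ?inE.
- apply: measurable_ltr_cst; apply: measurableT_comp; first exact: normr_measurable.
  exact: measurable_funB.
- apply: measurable_ltr_cst; apply: measurableT_comp; first exact: normr_measurable.
  exact: measurable_funB.
move=> w /=; rewrite !subr0 ltr_pdivrMr // => epsX.
apply: lt_le_trans epsX _; apply: le_trans (XY n w) _.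
by have := ler_norm (Y n w); have := normr_ge0 (Y n w); nra.
Qed.

End convergence_in_probability.

Theorem theorem1 (R : realType) (d : nat) (hd : (0 < d)%N)
  (dZ : measure_display) (OZ : measurableType dZ) (Q : probability OZ R)
  (Z : 'I_d -> OZ -> R)
  (hZn : forall j, std_normal Q (Z j)) (hZi : mutually_independent Q Z)
  (lam : 'I_d -> R) (hlam : forall j, 0 < lam j)
  (dO : measure_display) (O : measurableType dO) (P : probability O R)
  (T : nat -> O -> R) (hT : forall n, measurable_fun setT (T n))
  (lamh : nat -> O -> 'I_d -> R)
  (hlamh : forall n j, measurable_fun setT (fun w => lamh n w j))
  (hcvg : cvg_in_prob P (fun n w => eucl_norm (fun j => lamh n w j - lam j))
            (fun _ => 0)) :
  let p := fun n w => 1 - Hfun Q Z (T n w) lam in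
  let ph := fun n w => 1 - Hfun Q Z (T n w) (lamh n w) in
  (exists B : nat -> O -> R,
     (forall n, measurable_fun setT (B n)) /\
     bounded_in_prob P B /\
     (forall n w, `|ph n w - p n w| <=
                  eucl_norm (fun j => lamh n w j - lam j) * B n w))
  /\ cvg_in_prob P (fun n w => ph n w - p n w) (fun _ => 0).
Proof.
(* The bound also holds for [d = 0]. *)
move=> p ph; have mZ j : measurable_fun setT (Z j) := (hZn j).1.
have [C C0 H_lipschitz] := Hfun_lipschitz Q Z mZ hZi hZn lam hlam.
have ph_p_le n w : `|ph n w - p n w| <= C * eucl_norm (fun j => lamh n w j - lam j).
  have -> : ph n w - p n w = - (Hfun Q Z (T n w) (lamh n w) - Hfun Q Z (T n w) lam).
    by rewrite /ph /p; ring.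
  by rewrite normrN H_lipschitz.
split.
  exists (fun _ _ => C); split=> [n|]; first exact: measurable_cst.
  by split=> [|n w]; [exact: bounded_in_prob_cst | rewrite mulrC ph_p_le].
apply: cvg_in_prob0_le C0 ph_p_le hcvg => n.
  apply: measurable_funB; apply: measurable_funB => //.
    exact: measurable_Hfun (hT n) (hlamh n).
  exact: measurable_Hfun (hT n) (fun j => measurable_cst (lam j)).
by apply: measurable_eucl_norm => j; exact: measurable_funB.
Qed.
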